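(* Let $1\le p<\infty$ and $\alpha\ge1$. Let $P=\{p_1,\dots,p_n\}$ be a set of points in the closed upper half-plane $\{y\ge0\}$ with pairwise distinct $x$-coordinates, indexed so that the $x$-coordinates increase with the index, and such that no three points of $P$ lie on the boundary of a single $L_p$-disk centered on the $x$-axis. For $1\le i\le j\le n$ let $D(\{p_i,\dots,p_j\})$ denote the smallest $L_p$-disk centered on the $x$-axis containing $p_i,\dots,p_j$. Define $A[n+1]=0$ and, for $1\le i\le n$, $$A[i]=\min_{i\le j\le n}\Big\{ r\big(D(\{p_i,\dots,p_j\})\big)^\alpha + A[j+1]\Big\}.$$ Then $A[1]$ equals the minimum cost of a covering of $P$ by $L_p$-disks centered on the $x$-axis; equivalently, the minimum cost equals the minimum, over all partitions of $(p_1,\dots,p_n)$ into consecutive blocks $\{p_{i},\dots,p_{j}\}$, of the sum over blocks of $r(D(\text{block}))^\alpha$.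
   Context: For $c\in\mathbb{R}$ and $r\ge 0$, the $L_p$-disk centered on the $x$-axis with center $c$ and radius $r$ is $D=\{z\in\mathbb{R}^2 : \|z-(c,0)\|_p\le r\}$; $r(D)=r$ is its radius and its cost is $r^\alpha$. A covering of $P$ is a finite family of such disks whose union contains $P$; its cost is the sum of the costs of its disks. *)

From Stdlib Require Import Reals List.
Import ListNotations.
Open Scope R_scope.

(* Real power x^y for x >= 0, with the convention 0^y = 0 (used only with y > 0). *)
Definition rpow (x y : R) : R :=
  if Req_EM_T x 0 then 0 else Rpower x y.

Definition lpnorm (p u v : R) : R :=
  rpow (rpow (Rabs u) p + rpow (Rabs v) p) (/ p).

(* A disk centered on the x-axis: (center c, radius r), r >= 0. *)
Definition in_disk (p : R) (d : R * R) (x y : R) : Prop :=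
  lpnorm p (x - fst d) y <= snd d.

Definition on_boundary (p : R) (d : R * R) (x y : R) : Prop :=
  lpnorm p (x - fst d) y = snd d.

(* Points are p_1..p_n with coordinates (px k, py k). *)
Definition contains_block (p : R) (px py : nat -> R) (i j : nat) (d : R * R) : Prop :=
  forall k, (i <= k <= j)%nat -> in_disk p d (px k) (py k).

Definition is_smallest_radius (p : R) (px py : nat -> R) (i j : nat) (rad : R) : Prop :=
  0 <= rad /\
  (exists c, contains_block p px py i j (c, rad)) /\
  (forall c r, 0 <= r -> contains_block p px py i j (c, r) -> rad <= r).

Definition is_covering (p : R) (n : nat) (px py : nat -> R) (F : list (R * R)) : Prop :=
  (forall d, In d F -> 0 <= snd d) /\
  (forall k, (1 <= k <= n)%nat -> exists d, In d F /\ in_disk p d (px k) (py k)).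

Definition cover_cost (alpha : R) (F : list (R * R)) : R :=
  fold_right (fun d s => rpow (snd d) alpha + s) 0 F.

(* A partition of (p_i, ..., p_n) into consecutive blocks [(i1,j1); (i2,j2); ...]. *)
Inductive consec_partition (n : nat) : nat -> list (nat * nat) -> Prop :=
  | cp_nil : consec_partition n (S n) []
  | cp_cons : forall i j rest, (i <= j)%nat -> (j <= n)%nat ->
      consec_partition n (S j) rest -> consec_partition n i ((i, j) :: rest).

Definition partition_cost (alpha : R) (Drad : nat -> nat -> R) (B : list (nat * nat)) : R :=
  fold_right (fun b s => rpow (Drad (fst b) (snd b)) alpha + s) 0 B.

Definition is_min (S : R -> Prop) (m : R) : Prop :=
  S m /\ forall v, S v -> m <= v.

(* For a point (x, y) with y >= 0 and a disk d = (c, r), write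
   profile d x = r^p - |x - c|^p; then (x, y) lies in d iff y^p <= profile d x.
   Since t |-> |t|^p is convex (p >= 1), it has nondecreasing increments, so the
   difference of the profiles of two disks is monotone in x: two profiles cross
   at most once.  Consequently, if D is the disk of a covering F that is highest
   at the leftmost point p_i, and D covers exactly the run p_i, ..., p_j, then
   every later point covered by D is also covered by F without D.  Removing D and
   recursing shows that any covering costs at least A[i] (using r(D) >= r(D(p_i..p_j))).
   Conversely, unfolding the recurrence yields a partition into consecutive blocks
   of cost A[1]; its blocks' smallest disks form a covering of the same cost, and
   every partition yields a covering of its cost, so A[1] is both minima. *)

From Stdlib Require Import Reals Lra Lia List Classical.
From mathcomp Require all_boot all_order all_algebra interval_inference.
From mathcomp Require classical_sets reals exp convex hoelder Rstruct Rstruct_topology.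
Import ListNotations.
Open Scope R_scope.

Lemma rpow_ge0 x y : 0 <= rpow x y.
Proof.
  unfold rpow; destruct (Req_EM_T x 0); [lra|].
  left; apply exp_pos.
Qed.

Lemma rpow_0 y : rpow 0 y = 0.
Proof. unfold rpow; destruct (Req_EM_T 0 0); lra. Qed.

Lemma rpow_pos x y : 0 < x -> rpow x y = Rpower x y.
Proof. intros hx; unfold rpow; destruct (Req_EM_T x 0); [lra|reflexivity]. Qed.

Lemma rpow_le x z y : 0 <= x -> x <= z -> 0 < y -> rpow x y <= rpow z y.
Proof.
  intros [hx|<-] hxz hy.
  - rewrite !rpow_pos by lra. apply Rle_Rpower_l; lra.
  - rewrite rpow_0. apply rpow_ge0.
Qed.

Lemma rpow_rpow x a b : 0 <= x -> rpow (rpow x a) b = rpow x (a * b).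
Proof.
  intros [hx|<-].
  - rewrite (rpow_pos x a) by lra.
    rewrite rpow_pos by (unfold Rpower; apply exp_pos).
    rewrite rpow_pos by lra. apply Rpower_mult.
  - rewrite !rpow_0; reflexivity.
Qed.

Lemma rpow_1 x : 0 <= x -> rpow x 1 = x.
Proof.
  intros [hx|<-].
  - rewrite rpow_pos by lra; apply Rpower_1; lra.
  - apply rpow_0.
Qed.

Module PowerConvexity.
Import all_boot all_order all_algebra interval_inference.
Import classical_sets reals exp convex hoelder Rstruct Rstruct_topology.
Import Order.TTheory GRing.Theory Num.Theory.
Local Open Scope ring_scope.

Lemma rpowE (x y : R) : y != 0 -> rpow x y = powR x y.
Proof.
move=> y0; rewrite /rpow /powR.
case: (Req_dec_T x 0) => [->|xn0]; first by rewrite eqxx (negbTE y0).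
have -> : (x == 0) = false by apply/eqP.
by rewrite /Rpower RexpE RlnE.
Qed.

Lemma powR_convex (p a b l : R) : 1 <= p -> 0 <= a -> 0 <= b -> 0 <= l -> l <= 1 ->
  rpow (l * a + (1 - l) * b) p <= l * rpow a p + (1 - l) * rpow b p.
Proof.
move=> p1 a0 b0 l0 l1.
have p0 : p != 0 by rewrite gt_eqF // (lt_le_trans ltr01 p1).
rewrite !rpowE //.
have := @convex_powR R p p1 (Itv01 l0 l1) a b.
rewrite !inE /= !in_itv /= !andbT => /(_ a0 b0).
by rewrite !convRE.
Qed.

Local Open Scope R_scope.

Lemma rpow_convex (p a b l : R) : 1 <= p -> 0 <= a -> 0 <= b -> 0 <= l <= 1 ->
  rpow (l * a + (1 - l) * b) p <= l * rpow a p + (1 - l) * rpow b p.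
Proof.
move=> p1 a0 b0 [l0 l1].
by apply/RleP; apply: powR_convex; apply/RleP.
Qed.
End PowerConvexity.

Definition powabs (p t : R) : R := rpow (Rabs t) p.

Lemma powabs_convex p a b l : 1 <= p -> 0 <= l <= 1 ->
  powabs p (l * a + (1 - l) * b) <= l * powabs p a + (1 - l) * powabs p b.
Proof.
  intros hp hl. unfold powabs.
  assert (htri : Rabs (l * a + (1 - l) * b) <= l * Rabs a + (1 - l) * Rabs b).
  { eapply Rle_trans; [apply Rabs_triang|].
    rewrite !Rabs_mult, (Rabs_right l), (Rabs_right (1 - l)) by lra. lra. }
  eapply Rle_trans; [apply rpow_le; [apply Rabs_pos|exact htri|lra]|].
  apply PowerConvexity.rpow_convex; auto using Rabs_pos.
Qed.

(* A convex function has nondecreasing increments: for u <= v and d >= 0,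
   |u+d|^p - |u|^p <= |v+d|^p - |v|^p. *)
Lemma powabs_increments p u v d : 1 <= p -> u <= v -> 0 <= d ->
  powabs p (u + d) - powabs p u <= powabs p (v + d) - powabs p v.
Proof.
  intros hp huv hd.
  destruct (Req_dec (v + d - u) 0) as [e|ne].
  { assert (v = u) by lra. assert (d = 0) by lra. subst. lra. }
  set (L := v + d - u). assert (hL : 0 < L) by (unfold L; lra).
  set (lam := (v - u) / L).
  assert (hlam : 0 <= lam <= 1).
  { unfold lam; split.
    - apply Rmult_le_pos; [lra|left; apply Rinv_0_lt_compat; lra].
    - apply Rmult_le_reg_r with L; auto.
      unfold Rdiv; rewrite Rmult_assoc, Rinv_l by lra. unfold L; lra. }
  (* u + d and v are the convex combinations of u and v + d with weights lam, 1 - lam *)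
  assert (e1 : u + d = lam * u + (1 - lam) * (v + d)) by (unfold lam, L; field; lra).
  assert (e2 : v = (1 - lam) * u + (1 - (1 - lam)) * (v + d)) by (unfold lam, L; field; lra).
  pose proof (powabs_convex p u (v + d) lam hp hlam) as h1.
  pose proof (powabs_convex p u (v + d) (1 - lam) hp ltac:(lra)) as h2.
  rewrite <- e1 in h1. rewrite <- e2 in h2. lra.
Qed.

(* The p-th power of the height of the disk d above the abscissa x
   (negative outside its shadow on the x-axis). *)
Definition profile (p : R) (d : R * R) (x : R) : R := rpow (snd d) p - powabs p (x - fst d).

Lemma lpnorm_le_iff p u v r : 1 <= p -> 0 <= r ->
  (lpnorm p u v <= r <-> rpow (Rabs u) p + rpow (Rabs v) p <= rpow r p).
Proof.
  intros hp hr. unfold lpnorm.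
  set (N := rpow (Rabs u) p + rpow (Rabs v) p).
  assert (hN : 0 <= N) by (unfold N; pose proof (rpow_ge0 (Rabs u) p);
                           pose proof (rpow_ge0 (Rabs v) p); lra).
  split; intro h.
  - apply (rpow_le _ _ p) in h; [|apply rpow_ge0|lra].
    rewrite rpow_rpow, Rinv_l, rpow_1 in h by lra. exact h.
  - apply (rpow_le _ _ (/ p)) in h; [|exact hN|apply Rinv_0_lt_compat; lra].
    rewrite rpow_rpow, Rinv_r, rpow_1 in h by lra. exact h.
Qed.

Lemma in_disk_profile p d x y : 1 <= p -> 0 <= snd d -> 0 <= y ->
  (in_disk p d x y <-> rpow y p <= profile p d x).
Proof.
  intros hp hr hy. unfold in_disk, profile, powabs. rewrite lpnorm_le_iff by auto.
  rewrite (Rabs_right y) by lra. split; intro; lra.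
Qed.

Lemma profile_gap_mono p d e x x' : 1 <= p -> fst d <= fst e -> x <= x' ->
  profile p e x - profile p d x <= profile p e x' - profile p d x'.
Proof.
  intros hp hc hx. unfold profile.
  pose proof (powabs_increments p (x - fst e) (x' - fst e) (fst e - fst d) hp
                ltac:(lra) ltac:(lra)) as h.
  replace (x - fst e + (fst e - fst d)) with (x - fst d) in h by ring.
  replace (x' - fst e + (fst e - fst d)) with (x' - fst d) in h by ring. lra.
Qed.

Lemma profiles_cross_once p d e x1 x2 x3 : 1 <= p -> x1 <= x2 -> x2 <= x3 ->
  profile p e x1 <= profile p d x1 -> profile p d x2 < profile p e x2 ->
  profile p d x3 <= profile p e x3.
Proof.
  intros hp h12 h23 h1 h2.
  destruct (Rle_dec (fst d) (fst e)) as [hde|hed].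
  - pose proof (profile_gap_mono p d e x2 x3 hp hde h23). lra.
  - pose proof (profile_gap_mono p e d x1 x2 hp ltac:(lra) h12). lra.
Qed.

Lemma highest_disk_at p (F : list (R * R)) x : F <> [] ->
  exists D, In D F /\ forall e, In e F -> profile p e x <= profile p D x.
Proof.
  induction F as [|a F IH]; intro hne; [congruence|].
  destruct F as [|b F'].
  { exists a. split; [left; reflexivity|]. intros e [<-|[]]. lra. }
  destruct IH as [D [hD hmax]]; [congruence|].
  destruct (Rle_dec (profile p a x) (profile p D x)).
  - exists D. split; [right; exact hD|]. intros e [<-|he]; auto.
  - exists a. split; [left; reflexivity|]. intros e [<-|he]; [lra|].
    specialize (hmax e he). lra.
Qed.

Lemma cover_cost_elt alpha l1 d l2 :
  cover_cost alpha (l1 ++ d :: l2) = rpow (snd d) alpha + cover_cost alpha (l1 ++ l2).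
Proof. induction l1 as [|a l1 IH]; simpl; [reflexivity|]. rewrite IH. ring. Qed.

Lemma cover_cost_ge0 alpha F : 0 <= cover_cost alpha F.
Proof. induction F as [|a F IH]; simpl; [lra|]. pose proof (rpow_ge0 (snd a) alpha). lra. Qed.

Lemma maximal_run (Q : nat -> Prop) (i n : nat) : (i <= n)%nat -> Q i ->
  exists j, (i <= j <= n)%nat /\ (forall k, (i <= k <= j)%nat -> Q k) /\
            (j = n \/ ~ Q (S j)).
Proof.
  intros hin hQ.
  assert (ext : forall m j, (i <= j <= n)%nat -> (n - j = m)%nat ->
    (forall k, (i <= k <= j)%nat -> Q k) ->
    exists j, (i <= j <= n)%nat /\ (forall k, (i <= k <= j)%nat -> Q k) /\
              (j = n \/ ~ Q (S j))).
  { induction m as [|m IH]; intros j hj hm hall.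
    - exists j. repeat split; auto; lia.
    - destruct (classic (Q (S j))) as [hq|hq].
      + apply (IH (S j)); [lia|lia|].
        intros k hk. destruct (Nat.eq_dec k (S j)) as [->|]; [exact hq|apply hall; lia].
      + exists j. auto. }
  apply (ext (n - i)%nat i); [lia|lia|].
  intros k hk. replace k with i by lia. exact hQ.
Qed.

Section Covering.
Variables (p : R) (n : nat) (px py : nat -> R).
Hypothesis hp : 1 <= p.
Hypothesis hpy : forall k, (1 <= k <= n)%nat -> 0 <= py k.
Hypothesis hpx : forall k l, (1 <= k)%nat -> (k < l)%nat -> (l <= n)%nat -> px k < px l.

Definition nonneg_radii (F : list (R * R)) : Prop := forall d, In d F -> 0 <= snd d.

Definition covers_from (F : list (R * R)) (i : nat) : Prop :=
  forall k, (i <= k <= n)%nat -> exists d, In d F /\ in_disk p d (px k) (py k).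

Lemma px_le a b : (1 <= a)%nat -> (a <= b)%nat -> (b <= n)%nat -> px a <= px b.
Proof.
  intros. destruct (Nat.eq_dec a b) as [->|]; [lra|]. left; apply hpx; lia.
Qed.

Lemma highest_disk_covers F D k : (1 <= k <= n)%nat -> nonneg_radii F -> In D F ->
  (forall e, In e F -> profile p e (px k) <= profile p D (px k)) ->
  (exists d, In d F /\ in_disk p d (px k) (py k)) -> in_disk p D (px k) (py k).
Proof.
  intros hk hF hD hmax [d [hd hin]].
  pose proof (hpy k hk) as hy.
  rewrite (in_disk_profile p D) by auto. rewrite (in_disk_profile p d) in hin by auto.
  specialize (hmax d hd). lra.
Qed.

(* Key step: let D be the disk of F = l1 ++ D :: l2 highest above p_i, and suppose
   D misses p_(j+1).  Then the remaining disks still cover p_(j+1), ..., p_n: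
   a point p_k beyond p_(j+1) covered by D is covered by the disk e covering p_(j+1),
   because the profile of e, above D's at p_(j+1), stays above it from there on. *)
Lemma drop_highest_disk i j l1 D l2 :
  (1 <= i)%nat -> (i <= j)%nat -> nonneg_radii (l1 ++ D :: l2) ->
  (forall e, In e (l1 ++ D :: l2) -> profile p e (px i) <= profile p D (px i)) ->
  ~ in_disk p D (px (S j)) (py (S j)) ->
  covers_from (l1 ++ D :: l2) i -> covers_from (l1 ++ l2) (S j).
Proof.
  intros hi hij hF hmax hmiss hcov k hk.
  destruct (hcov (S j) ltac:(lia)) as [e [he hine]].
  destruct (in_elt_inv e D l1 l2 he) as [->|he']; [contradiction|].
  destruct (hcov k ltac:(lia)) as [d [hd hink]].
  destruct (in_elt_inv d D l1 l2 hd) as [->|hd']; [|exists d; auto].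
  exists e. split; [exact he'|].
  assert (hrD : 0 <= snd D) by (apply hF, in_elt).
  assert (hre : 0 <= snd e) by (apply hF; exact he).
  pose proof (hpy (S j) ltac:(lia)) as hyj. pose proof (hpy k ltac:(lia)) as hyk.
  rewrite (in_disk_profile p e) in hine |- * by auto.
  rewrite (in_disk_profile p D) in hmiss, hink by auto.
  assert (hcross : profile p D (px k) <= profile p e (px k)).
  { apply (profiles_cross_once p D e (px i) (px (S j)) (px k) hp);
      [apply px_le; lia|apply px_le; lia|apply hmax; exact he|lra]. }
  lra.
Qed.

Variables (alpha : R) (Drad : nat -> nat -> R) (A : nat -> R).
Hypothesis halpha : 1 <= alpha.
Hypothesis hD : forall i j, (1 <= i)%nat -> (i <= j)%nat -> (j <= n)%nat ->
  is_smallest_radius p px py i j (Drad i j).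
Hypothesis hA0 : A (S n) = 0.
Hypothesis hA : forall i, (1 <= i <= n)%nat ->
  is_min (fun v => exists j, (i <= j <= n)%nat /\ v = rpow (Drad i j) alpha + A (S j)) (A i).

Lemma covering_lower_bound : forall m i F, (S n - i <= m)%nat -> (1 <= i <= S n)%nat ->
  nonneg_radii F -> covers_from F i -> A i <= cover_cost alpha F.
Proof.
  induction m as [|m IH]; intros i F hm hi hF hcov;
    (destruct (Nat.eq_dec i (S n)) as [->|hin];
     [rewrite hA0; apply cover_cost_ge0|]); [lia|].
  destruct (highest_disk_at p F (px i)) as [D [hDF hmax]].
  { intros ->. destruct (hcov i ltac:(lia)) as [d [[] _]]. }
  assert (hDi : in_disk p D (px i) (py i))
    by (apply (highest_disk_covers F); [lia|exact hF|exact hDF|exact hmax|apply hcov; lia]).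
  destruct (maximal_run (fun k => in_disk p D (px k) (py k)) i n ltac:(lia) hDi)
    as [j [hj [hrun hend]]].
  destruct (in_split _ _ hDF) as [l1 [l2 ->]].
  assert (hrest : A (S j) <= cover_cost alpha (l1 ++ l2)).
  { apply IH; [lia|lia| |].
    - intros d hd. apply hF, (incl_app_app (incl_refl l1) (incl_tl D (incl_refl l2))), hd.
    - destruct hend as [->|hmiss]; [intros k hk; lia|].
      exact (drop_highest_disk i j l1 D l2 ltac:(lia) ltac:(lia) hF hmax hmiss hcov). }
  destruct (hD i j ltac:(lia) ltac:(lia) ltac:(lia)) as [hD0 [_ hDmin]].
  assert (hle : Drad i j <= snd D)
    by (destruct D as [c r]; apply (hDmin c r); [apply (hF (c, r)), in_elt|exact hrun]).
  assert (hAi : A i <= rpow (Drad i j) alpha + A (S j))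
    by (apply (hA i ltac:(lia)); exists j; split; [lia|reflexivity]).
  pose proof (rpow_le (Drad i j) (snd D) alpha hD0 hle ltac:(lra)).
  rewrite cover_cost_elt. lra.
Qed.

Lemma recurrence_partition : forall m i, (S n - i <= m)%nat -> (1 <= i <= S n)%nat ->
  exists B, consec_partition n i B /\ A i = partition_cost alpha Drad B.
Proof.
  induction m as [|m IH]; intros i hm hi;
    (destruct (Nat.eq_dec i (S n)) as [->|hin];
     [exists []; split; [constructor|simpl; exact hA0]|]); [lia|].
  destruct (hA i ltac:(lia)) as [[j [hj ->]] _].
  destruct (IH (S j) ltac:(lia) ltac:(lia)) as [B [hB eB]].
  exists ((i, j) :: B). split.
  - constructor; [lia|lia|exact hB].
  - simpl. rewrite eB. reflexivity.
Qed.

Lemma partition_covering i B : consec_partition n i B -> (1 <= i)%nat ->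
  exists F, nonneg_radii F /\ covers_from F i /\
            cover_cost alpha F = partition_cost alpha Drad B.
Proof.
  induction 1 as [|i j rest hij hjn hrest IH]; intro hi.
  { exists []. split; [intros d []|]. split; [intros k hk; lia|reflexivity]. }
  destruct (IH ltac:(lia)) as [F [hF [hcov ecost]]].
  destruct (hD i j hi hij hjn) as [hr [[c hc] _]].
  exists ((c, Drad i j) :: F). split; [|split].
  - intros d [<-|hd]; [exact hr|auto].
  - intros k hk. destruct (Compare_dec.le_lt_dec k j).
    + exists (c, Drad i j). split; [left; reflexivity|]. apply hc; lia.
    + destruct (hcov k ltac:(lia)) as [d [hd hdk]]. exists d. split; [right|]; auto.
  - simpl. rewrite ecost. reflexivity.
Qed.

End Covering.

Theorem mainTheorem6 (p alpha : R) (n : nat) (px py : nat -> R)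
  (Drad : nat -> nat -> R) (A : nat -> R) :
  1 <= p -> 1 <= alpha ->
  (forall k, (1 <= k <= n)%nat -> 0 <= py k) ->
  (forall k l, (1 <= k)%nat -> (k < l)%nat -> (l <= n)%nat -> px k < px l) ->
  (forall c r a b e, (1 <= a <= n)%nat -> (1 <= b <= n)%nat -> (1 <= e <= n)%nat ->
     a <> b -> a <> e -> b <> e -> 0 <= r ->
     ~ (on_boundary p (c, r) (px a) (py a) /\ on_boundary p (c, r) (px b) (py b) /\
        on_boundary p (c, r) (px e) (py e))) ->
  (forall i j, (1 <= i)%nat -> (i <= j)%nat -> (j <= n)%nat ->
     is_smallest_radius p px py i j (Drad i j)) ->
  A (S n) = 0 ->
  (forall i, (1 <= i <= n)%nat ->
     is_min (fun v => exists j, (i <= j <= n)%nat /\ v = rpow (Drad i j) alpha + A (S j)) (A i)) ->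
  is_min (fun v => exists F, is_covering p n px py F /\ v = cover_cost alpha F) (A 1%nat) /\
  is_min (fun v => exists B, consec_partition n 1 B /\ v = partition_cost alpha Drad B) (A 1%nat).
Proof.
  intros hp halpha hpy hpx _ hD hA0 hA.
  assert (hlow : forall F, is_covering p n px py F -> A 1%nat <= cover_cost alpha F).
  { intros F [hF hcov].
    exact (covering_lower_bound p n px py hp hpy hpx alpha Drad A halpha hD hA0 hA
             n 1 F ltac:(lia) ltac:(lia) hF hcov). }
  destruct (recurrence_partition n alpha Drad A hA0 hA n 1 ltac:(lia) ltac:(lia))
    as [B [hB eB]].
  pose proof (fun B hB => partition_covering p n px py alpha Drad hD 1 B hB ltac:(lia))
    as hcover.
  split; split.
  - destruct (hcover B hB) as [F [hF [hcov ecost]]].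
    exists F. split; [split; assumption|congruence].
  - intros v [F [hF ->]]. exact (hlow F hF).
  - exists B. split; assumption.
  - intros v [B' [hB' ->]].
    destruct (hcover B' hB') as [F [hF [hcov ecost]]].
    rewrite <- ecost. apply hlow. split; assumption.
Qed.
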